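(* Let $\langle\{a,b\},C,d,O,v,\{\prec,\prec^{-1}\}\rangle$ be a two-player infinite sequential game in which player $a$ has preference $\prec$ and player $b$ has preference $\prec^{-1}$, let $\Gamma\subseteq\mathcal{P}(C^\omega)$, and assume: (1) $\prec$ is a strict weak order; (2) for every play $p\in C^\omega$ and increasing $\varphi:\mathbb{N}\to\mathbb{N}$, if $d(p_{<\varphi(n)})=a$ and $G_a(p_{<\varphi(n+1)})\subsetneq G_a(p_{<\varphi(n)})$ for all $n$, then $v(p)\in\bigcap_n G_a(p_{<\varphi(n)})$; (3) for all $\gamma\in C^*$ there exists a strategy $s$ of $a$ with $g_a(\gamma,s)=G_a(\gamma)$, and there exists a strategy $s$ of $b$ with $g_b(\gamma,s)=G_b(\gamma)$; (4) for every non-empty closed $E\subseteq C^\omega$, $v[E]$ has a $\prec$-maximal and a $\prec$-minimal element (i.e. some $o\in v[E]$ with $\neg(o\prec o')$ for all $o'\in v[E]$, and some $o\in v[E]$ with $\neg(o'\prec o)$ for all $o'\in v[E]$); (5) for every $\prec$-extremal interval $I$ and $\gamma\in C^*$, $v^{-1}[I]\cap\gamma C^\omega\in\Gamma$; (6) the win-lose game $\langle C,D,W\rangle$ is determined for all $W\in\Gamma$ and $D\subseteq C^*$. Then the game has a subgame perfect equilibrium.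
   Context: A strategy of player $X$ is a function $s:d^{-1}(\{X\})\to C$; a profile is identified with $\sigma:C^*\to C$. For $\gamma\in C^*$, the play $p^\gamma(\sigma)$ is given by $p_n=\gamma_n$ for $n<|\gamma|$ and $p_n=\sigma(p_{<n})$ otherwise ($p_{<n}$ the length-$n$ prefix). A profile $\sigma$ is a subgame perfect equilibrium if there are no $\gamma\in C^*$, player $X$ and strategy $s$ of $X$ such that $v(p^\gamma(\sigma))\prec_X v(p^\gamma(\sigma_{X\mapsto s}))$ (with $\prec_a=\prec$, $\prec_b=\prec^{-1}$, and $\sigma_{X\mapsto s}$ agreeing with $s$ on $d^{-1}(\{X\})$ and with $\sigma$ elsewhere). For a partial $t:\subseteq C^*\to C$, $P(t)$ is the set of plays $p(\sigma)$ of total $\sigma$ extending $t$. For a strategy $s$ of $X$ and $\gamma\in C^*$, $s|_\gamma$ is its restriction to histories extending $\gamma$; $g_X(\gamma,s):=\{o\in O\mid\exists p\in P(s|_\gamma)\cap\gamma C^\omega,\ \neg(o\prec_X v(p))\}$ and $G_X(\gamma):=\bigcap_s g_X(\gamma,s)$. A strict weak order is an irreflexive, transitive relation with $\neg(x\prec y)\wedge\neg(y\prec z)\Rightarrow\neg(x\prec z)$. A $\prec$-extremal interval is a set $I\subseteq O$ that is either terminal (if $o\in I$ and $\neg(o'\prec o)$ then $o'\in I$) or initial (if $o\in I$ and $\neg(o\prec o')$ then $o'\in I$). The win-lose game $\langle C,D,W\rangle$ ($D\subseteq C^*$, $W\subseteq C^\omega$) is the two-player game where the first player chooses after histories in $D$,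 the second after histories in $C^*\setminus D$, and the first player wins iff the play lies in $W$; it is determined if one of the players has a winning strategy. *)

From Stdlib Require Import List Arith.
Import ListNotations.
Set Implicit Arguments.

Inductive Player : Type := pa | pb.

Definition Player_eq_dec (x y : Player) : {x = y} + {x <> y}.
Proof. decide equality. Defined.

Section Games.
Variables (C O : Type).

Definition pre (p : nat -> C) (n : nat) : list C := map p (seq 0 n).

Definition extends (gamma h : list C) : Prop := exists l, h = gamma ++ l.

Definition cyl (gamma : list C) (p : nat -> C) : Prop := pre p (length gamma) = gamma.

Definition next (gamma : list C) (sigma : list C -> C) (h : list C) : C :=
  match nth_error gamma (length h) with Some c => c | None => sigma h end.

Fixpoint hist (gamma : list C) (sigma : list C -> C) (n : nat) : list C :=
  match n with
  | 0 => []
  | S m => hist gamma sigma m ++ [next gamma sigma (hist gamma sigma m)]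
  end.

Definition play (gamma : list C) (sigma : list C -> C) : nat -> C :=
  fun n => next gamma sigma (hist gamma sigma n).

Variables (d : list C -> Player) (v : (nat -> C) -> O) (prec : O -> O -> Prop).

Definition precX (X : Player) (x y : O) : Prop :=
  match X with pa => prec x y | pb => prec y x end.

(* a strategy of X is encoded as a total function list C -> C;
   only its values on d^{-1}({X}) are ever used *)
Definition deviate (sigma : list C -> C) (X : Player) (s : list C -> C) : list C -> C :=
  fun h => if Player_eq_dec (d h) X then s h else sigma h.

Definition SPE (sigma : list C -> C) : Prop :=
  ~ exists (gamma : list C) (X : Player) (s : list C -> C),
      precX X (v (play gamma sigma)) (v (play gamma (deviate sigma X s))).

(* P(s|_gamma): plays p(sigma) of total profiles sigma extending s restricted
   to the histories in d^{-1}({X}) that extend gamma *)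
Definition Prestr (X : Player) (s : list C -> C) (gamma : list C) (p : nat -> C) : Prop :=
  exists sigma : list C -> C,
    (forall h, d h = X -> extends gamma h -> sigma h = s h) /\
    (forall n, p n = play [] sigma n).

Definition gX (X : Player) (gamma : list C) (s : list C -> C) (o : O) : Prop :=
  exists p, Prestr X s gamma p /\ cyl gamma p /\ ~ precX X o (v p).

Definition GX (X : Player) (gamma : list C) (o : O) : Prop :=
  forall s : list C -> C, gX X gamma s o.

End Games.

Definition strict_weak_order {O : Type} (prec : O -> O -> Prop) : Prop :=
  (forall x, ~ prec x x) /\
  (forall x y z, prec x y -> prec y z -> prec x z) /\
  (forall x y z, ~ prec x y -> ~ prec y z -> ~ prec x z).

(* closed subsets of C^omega for the product of discrete topologies *)
Definition closed_set {C : Type} (E : (nat -> C) -> Prop) : Prop :=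
  forall p, (forall n, exists q, E q /\ pre q n = pre p n) -> E p.

Definition terminal_interval {O : Type} (prec : O -> O -> Prop) (I : O -> Prop) : Prop :=
  forall o o', I o -> ~ prec o' o -> I o'.

Definition initial_interval {O : Type} (prec : O -> O -> Prop) (I : O -> Prop) : Prop :=
  forall o o', I o -> ~ prec o o' -> I o'.

Definition extremal_interval {O : Type} (prec : O -> O -> Prop) (I : O -> Prop) : Prop :=
  terminal_interval prec I \/ initial_interval prec I.

(* the win-lose game <C,D,W>: the first player plays after histories in D,
   the second after histories outside D; a profile sigma combines strategies
   s1 (on D) and s2 (off D) *)
Definition determined {C : Type} (D : list C -> Prop) (W : (nat -> C) -> Prop) : Prop :=
  (exists s1 : list C -> C, forall sigma : list C -> C,
      (forall h, D h -> sigma h = s1 h) -> W (play [] sigma)) \/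
  (exists s2 : list C -> C, forall sigma : list C -> C,
      (forall h, ~ D h -> sigma h = s2 h) -> ~ W (play [] sigma)).

(* For a history g, the play from g in which both players follow strategies attaining
   G_a(g) and G_b(g) has a value w(g) lying in both sets.  Since [prec x] is a terminal
   interval, the win-lose game "stay in g C^omega and end strictly above x" is determined;
   a winning strategy of a contradicts x in G_a(g), one of b shows that nothing in G_b(g)
   is strictly above x.  Hence G_X(g) is exactly {o | ~ o <_X w(g)}.

   Player X now follows, at each history, the optimal strategy of the last history at
   which G_X shrank or X deviated from it.  Along a play p consistent with this, G_X is
   non-increasing.  If it eventually stabilises, p eventually follows a single optimal
   strategy, so v(p) lies in G_X.  Otherwise the plays witnessing w(p_<n) converge to p,
   so together with p they form a closed set; its <_X-maximal value (hypothesis 4) can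
   only be v(p), which is then not below w(g).  Combining both players' strategies gives
   a subgame perfect equilibrium. *)

From Stdlib Require Import List Arith Lia Classical ClassicalEpsilon FunctionalExtensionality.
Import ListNotations.

Section Prefixes.
Context {C : Type}.
Implicit Types (p q : nat -> C) (g h : list C).

Lemma pre_length p n : length (pre p n) = n.
Proof. unfold pre. now rewrite length_map, length_seq. Qed.

Lemma pre_S p n : pre p (S n) = pre p n ++ [p n].
Proof. unfold pre. now rewrite seq_S, map_app. Qed.

Lemma nth_error_pre p n k :
  nth_error (pre p n) k = if k <? n then Some (p k) else None.
Proof. unfold pre. rewrite nth_error_map, nth_error_seq. now destruct (k <? n). Qed.

Lemma pre_eq_lt p q n k : pre p n = pre q n -> k < n -> p k = q k.
Proof.
  intros H Hk. assert (E := f_equal (fun l => nth_error l k) H). simpl in E.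
  rewrite !nth_error_pre in E. apply Nat.ltb_lt in Hk. rewrite Hk in E. congruence.
Qed.

Lemma pre_ext p q n : (forall k, k < n -> p k = q k) -> pre p n = pre q n.
Proof.
  intros H. unfold pre. apply map_ext_in. intros a Ha. apply in_seq in Ha. apply H. lia.
Qed.

Lemma pre_eq_le p q n m : pre p n = pre q n -> m <= n -> pre p m = pre q m.
Proof. intros H Hm. apply pre_ext. intros k Hk. apply (pre_eq_lt p q n); auto; lia. Qed.

Lemma cyl_extends g p n : cyl g p -> length g <= n -> extends g (pre p n).
Proof.
  intros H Hn. exists (map p (seq (length g) (n - length g))).
  replace n with (length g + (n - length g)) at 1 by lia.
  unfold pre. rewrite seq_app, map_app. simpl. fold (pre p (length g)). now rewrite H.
Qed.

Lemma extends_length g h : extends g h -> length g <= length h.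
Proof. intros [l ->]. rewrite length_app. lia. Qed.

Definition follows (F : list C -> C) (m : nat) p : Prop :=
  forall n, m <= n -> p n = F (pre p n).

Lemma follows_unique F m p q :
  pre p m = pre q m -> follows F m p -> follows F m q -> p = q.
Proof.
  intros H0 Hp Hq.
  assert (Hpre : forall n, pre p n = pre q n).
  { induction n as [|n IHn]; [reflexivity|].
    destruct (le_lt_dec (S n) m).
    - now apply (pre_eq_le p q m).
    - rewrite !pre_S, IHn, (Hp n), (Hq n), IHn by lia. reflexivity. }
  apply functional_extensionality. intros k. apply (pre_eq_lt p q (S k)); auto.
Qed.

Lemma hist_pre g F n : hist g F n = pre (play g F) n.
Proof.
  induction n as [|n IHn]; simpl; auto. rewrite pre_S, IHn. unfold play. now rewrite IHn.
Qed.

Lemma play_lt g F n c : nth_error g n = Some c -> play g F n = c.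
Proof. intros H. unfold play, next. now rewrite hist_pre, pre_length, H. Qed.

Lemma play_follows g F m : length g <= m -> follows F m (play g F).
Proof.
  intros Hm n Hn. unfold play at 1, next. rewrite hist_pre, pre_length.
  now rewrite (proj2 (nth_error_None g n)) by lia.
Qed.

Lemma follows_play_nil F p : follows F 0 p -> p = play [] F.
Proof.
  intros Hp. apply (follows_unique F 0); auto. apply play_follows. simpl; lia.
Qed.

Lemma cyl_play g F : cyl g (play g F).
Proof.
  unfold cyl. apply nth_error_ext. intros n. rewrite nth_error_pre.
  destruct (n <? length g) eqn:E.
  - apply Nat.ltb_lt in E. destruct (nth_error g n) eqn:E2.
    + f_equal. now apply play_lt.
    + apply nth_error_None in E2. lia.
  - apply Nat.ltb_ge in E. symmetry. now apply nth_error_None.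
Qed.

Lemma stream_neq_pre p q : p <> q -> exists n, pre p n <> pre q n.
Proof.
  intros Hpq. apply NNPP. intros Hall. apply Hpq, functional_extensionality. intros k.
  apply (pre_eq_lt p q (S k)); [|lia]. apply NNPP. intros Hk. apply Hall. now exists (S k).
Qed.

Lemma finite_separation (f : nat -> nat -> C) (P : nat -> Prop) p M :
  (forall n, n < M -> P n -> f n <> p) ->
  exists B, forall n, n < M -> P n -> pre (f n) B <> pre p B.
Proof.
  induction M as [|M IHM]; intros Hf.
  - exists 0. intros n Hn. lia.
  - destruct IHM as [B HB]; [intros n Hn; apply Hf; lia|].
    destruct (classic (P M)) as [HM|HM].
    + destruct (stream_neq_pre _ _ (Hf M (Nat.lt_succ_diag_r M) HM)) as [k Hk].
      exists (Nat.max B k). intros n Hn HPn Heq.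
      destruct (Nat.eq_dec n M) as [->|HnM].
      * apply Hk. apply (pre_eq_le _ _ _ _ Heq). lia.
      * apply (HB n); [lia|auto|]. apply (pre_eq_le _ _ _ _ Heq). lia.
    + exists B. intros n Hn HPn. destruct (Nat.eq_dec n M) as [->|HnM]; [tauto|].
      apply HB; auto; lia.
Qed.

Lemma closed_with_limit (r : nat -> nat -> C) q N :
  (forall n, N <= n -> pre (r n) n = pre q n) ->
  closed_set (fun p => p = q \/ exists n, N <= n /\ p = r n).
Proof.
  intros Hr p Hp. destruct (classic (p = q)) as [->|Hpq]; [now left|].
  right. apply NNPP. intros Hno.
  destruct (stream_neq_pre _ _ Hpq) as [k Hk].
  destruct (finite_separation r (fun n => N <= n) p k) as [B HB].
  { intros n _ Hn Hrn. apply Hno. now exists n. }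
  destruct (Hp (B + k)) as [e [[->|[n [Hn ->]]] He]].
  - apply Hk. symmetry. apply (pre_eq_le _ _ _ _ He). lia.
  - destruct (lt_dec n k) as [Hnk|Hnk].
    + apply (HB n Hnk Hn). apply (pre_eq_le _ _ _ _ He). lia.
    + apply Hk. transitivity (pre (r n) k).
      * symmetry. apply (pre_eq_le _ _ _ _ He). lia.
      * apply (pre_eq_le _ _ _ _ (Hr n Hn)). lia.
Qed.

End Prefixes.

Definition opp (X : Player) : Player := match X with pa => pb | pb => pa end.

Lemma neq_opp (X Z : Player) : Z <> X -> Z = opp X.
Proof. destruct X, Z; simpl; congruence. Qed.

Lemma swo_precX {O : Type} (prec : O -> O -> Prop) X :
  strict_weak_order prec -> strict_weak_order (precX prec X).
Proof. intros [Hirr [Htr Hneg]]. destruct X; repeat split; simpl; eauto. Qed.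

Definition splice {C : Type} (D : list C -> Prop) (s t : list C -> C) (h : list C) : C :=
  if excluded_middle_informative (D h) then s h else t h.

Lemma splice_in {C : Type} (D : list C -> Prop) s t h : D h -> splice D s t h = s h.
Proof. unfold splice. now destruct excluded_middle_informative. Qed.

Lemma splice_out {C : Type} (D : list C -> Prop) s t h : ~ D h -> splice D s t h = t h.
Proof. unfold splice. now destruct excluded_middle_informative. Qed.

Section Game.
Context {C O : Type} (d : list C -> Player) (v : (nat -> C) -> O) (prec : O -> O -> Prop).

Definition consistent (X : Player) (s : list C -> C) (m : nat) (p : nat -> C) : Prop :=
  forall n, m <= n -> d (pre p n) = X -> p n = s (pre p n).

Lemma play_consistent X s t g :
  (forall h, d h = X -> t h = s h) -> consistent X s (length g) (play g t).
Proof.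
  intros Hts n Hn Hd. rewrite (play_follows g t _ (le_n _) n Hn). now apply Hts.
Qed.

Lemma gX_consistent X g s o :
  gX d v prec X g s o <->
  exists p, cyl g p /\ consistent X s (length g) p /\ ~ precX prec X o (v p).
Proof.
  split.
  - intros [p [[sigma [Hagree Hp]] [Hcyl Ho]]].
    assert (p = play [] sigma) as -> by (apply functional_extensionality; auto).
    exists (play [] sigma). repeat split; auto. intros n Hn Hd.
    rewrite (play_follows [] sigma n (Nat.le_0_l n) n) by lia.
    apply Hagree; auto. now apply cyl_extends.
  - intros [p [Hcyl [Hcons Ho]]].
    set (sigma := splice (fun h => h = pre p (length h)) (fun h => p (length h)) s).
    assert (Hp : p = play [] sigma).
    { apply follows_play_nil. intros n _. unfold sigma, splice. rewrite pre_length.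
      destruct excluded_middle_informative; tauto. }
    exists p. repeat split; auto. exists sigma. split; [|now rewrite <- Hp].
    intros h Hd Hext. unfold sigma, splice.
    destruct excluded_middle_informative as [Hh|]; auto.
    apply extends_length in Hext. remember (length h) as n. subst h.
    exact (Hcons n Hext Hd).
Qed.

Lemma gX_prefix_mono X s q m n o : m <= n ->
  (forall k, m <= k < n -> d (pre q k) = X -> q k = s (pre q k)) ->
  gX d v prec X (pre q n) s o -> gX d v prec X (pre q m) s o.
Proof.
  intros Hmn Hq Hg. apply gX_consistent in Hg as [p [Hcyl [Hcons Ho]]]. apply gX_consistent.
  unfold cyl in Hcyl. rewrite pre_length in *. exists p. repeat split; auto.
  - unfold cyl. rewrite pre_length. now apply (pre_eq_le _ _ n).
  - intros k Hk Hd. destruct (le_lt_dec n k); [now apply Hcons|].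
    assert (Hpk : pre p k = pre q k) by (apply (pre_eq_le _ _ n); auto; lia).
    rewrite Hpk in *. rewrite (pre_eq_lt p q n k); auto.
Qed.

Lemma GX_lower X g o o' : strict_weak_order (precX prec X) ->
  GX d v prec X g o -> ~ precX prec X o' o -> GX d v prec X g o'.
Proof.
  intros [_ [_ Hneg]] Hg Ho s. destruct (proj1 (gX_consistent _ _ _ _) (Hg s)) as [p [H1 [H2 H3]]].
  apply gX_consistent. exists p. repeat split; eauto.
Qed.

Definition pa_domain (g h : list C) : Prop := ~ extends g h \/ d h = pa.

Lemma pa_winning_not_GX g x s :
  (forall sigma, (forall h, pa_domain g h -> sigma h = s h) ->
     prec x (v (play [] sigma)) /\ cyl g (play [] sigma)) ->
  ~ GX d v prec pa g x.
Proof.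
  intros Hwin Hx. destruct (proj1 (gX_consistent _ _ _ _) (Hx s)) as [p [Hcyl [Hcons Ho]]].
  set (sigma := splice (pa_domain g) s (fun h => p (length h))).
  destruct (Hwin sigma) as [Hvx Hcyl']; [intros h; apply splice_in|].
  assert (Hp : p = play [] sigma).
  { apply (follows_unique sigma (length g)).
    - now rewrite Hcyl, Hcyl'.
    - intros n Hn. unfold sigma, splice. rewrite pre_length.
      destruct excluded_middle_informative as [[Hout|Hd]|]; auto.
      now contradict Hout; apply cyl_extends.
    - apply play_follows. simpl; lia. }
  rewrite <- Hp in Hvx. exact (Ho Hvx).
Qed.

Lemma pb_winning_not_prec_GX g x y s : strict_weak_order prec ->
  (forall sigma, (forall h, ~ pa_domain g h -> sigma h = s h) ->
     ~ (prec x (v (play [] sigma)) /\ cyl g (play [] sigma))) ->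
  GX d v prec pb g y -> ~ prec x y.
Proof.
  intros [_ [_ Hneg]] Hwin Hy.
  destruct (proj1 (gX_consistent _ _ _ _) (Hy s)) as [p [Hcyl [Hcons Ho]]].
  set (sigma := splice (pa_domain g) (fun h => p (length h)) s).
  assert (Hp : p = play [] sigma).
  { apply follows_play_nil. intros n _. unfold sigma, splice. rewrite pre_length.
    destruct excluded_middle_informative as [|Hin]; auto.
    apply not_or_and in Hin as [Hext Hd]. apply NNPP, extends_length in Hext.
    rewrite pre_length in Hext. apply Hcons; auto. now apply neq_opp in Hd. }
  assert (Hxp : ~ prec x (v p)).
  { intros Hxp. apply (Hwin sigma); [intros h; apply splice_out|]. now rewrite <- Hp. }
  exact (Hneg _ _ _ Hxp Ho).
Qed.

Lemma GX_pa_pb_incompatible (Gamma : ((nat -> C) -> Prop) -> Prop) :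
  strict_weak_order prec ->
  (forall I g, extremal_interval prec I -> Gamma (fun p => I (v p) /\ cyl g p)) ->
  (forall W D, Gamma W -> determined D W) ->
  forall g x y, GX d v prec pa g x -> GX d v prec pb g y -> ~ prec x y.
Proof.
  intros Hswo Hgamma Hdet g x y Hx Hy.
  assert (Hup : extremal_interval prec (prec x)).
  { left. intros o o' Ho Ho'. destruct Hswo as [_ [_ Hneg]].
    apply NNPP. intros Hc. exact (Hneg _ _ _ Hc Ho' Ho). }
  destruct (Hdet _ (pa_domain g) (Hgamma _ g Hup)) as [[s Hs]|[s Hs]].
  - now contradict Hx; apply (pa_winning_not_GX g x s).
  - exact (pb_winning_not_prec_GX g x y s Hswo Hs Hy).
Qed.

Lemma GX_opp_incompatible (Gamma : ((nat -> C) -> Prop) -> Prop) :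
  strict_weak_order prec ->
  (forall I g, extremal_interval prec I -> Gamma (fun p => I (v p) /\ cyl g p)) ->
  (forall W D, Gamma W -> determined D W) ->
  forall X g x y, GX d v prec X g x -> GX d v prec (opp X) g y -> ~ precX prec X x y.
Proof.
  intros Hswo Hgamma Hdet [|] g x y Hx Hy; simpl.
  - exact (GX_pa_pb_incompatible Gamma Hswo Hgamma Hdet g x y Hx Hy).
  - exact (GX_pa_pb_incompatible Gamma Hswo Hgamma Hdet g y x Hy Hx).
Qed.

End Game.

Section Uniform.
Context {C O : Type} (d : list C -> Player) (v : (nat -> C) -> O) (prec : O -> O -> Prop).
Variables (X : Player) (sopt : Player -> list C -> list C -> C).
Hypothesis swo : strict_weak_order (precX prec X).
Hypothesis sopt_spec : forall Z g o, gX d v prec Z g (sopt Z g) o <-> GX d v prec Z g o.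
Hypothesis incompatible : forall g x y,
  GX d v prec X g x -> GX d v prec (opp X) g y -> ~ precX prec X x y.
Hypothesis closed_maximum : forall E : (nat -> C) -> Prop, (exists p, E p) -> closed_set E ->
  exists o, (exists p, E p /\ v p = o) /\
    forall o', (exists p', E p' /\ v p' = o') -> ~ precX prec X o o'.

Notation G := (GX d v prec X).
Notation R := (precX prec X).

Lemma optimal_play_value g :
  exists r, cyl g r /\ G g (v r) /\ GX d v prec (opp X) g (v r).
Proof.
  set (sigma := fun h => sopt (d h) g h).
  assert (Hirr : forall Z o, ~ precX prec Z o o).
  { destruct swo as [Hirr _]. intros [|] o; destruct X; apply Hirr. }
  exists (play g sigma). split; [apply cyl_play|].
  split; apply sopt_spec, gX_consistent; exists (play g sigma);
    repeat split; auto using cyl_play; apply play_consistent;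
    intros h Hh; unfold sigma; now rewrite Hh.
Qed.

Lemma GX_not_below g r o : G g (v r) -> GX d v prec (opp X) g (v r) ->
  (G g o <-> ~ R o (v r)).
Proof.
  intros Hr Hr'. split.
  - intros Ho. exact (incompatible g o (v r) Ho Hr').
  - intros Ho. exact (GX_lower d v prec X g (v r) o swo Hr Ho).
Qed.

(* [uniform_strategy] plays [sopt X b] at [h], where the anchor [b] of [h] is the latest
   prefix of [h] at which [X] had left [sopt X] of the previous anchor or [G] differed
   from [G] at the previous anchor.  [anchor_rev] works on the reversed history so that
   extending a history by one move is one recursion step. *)
Definition keeps_anchor (b h : list C) (c : C) : Prop :=
  (d h = X -> c = sopt X b h) /\ (forall o, G (h ++ [c]) o <-> G b o).

Fixpoint anchor_rev (r : list C) : list C :=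
  match r with
  | [] => []
  | c :: r' =>
      if excluded_middle_informative (keeps_anchor (anchor_rev r') (rev r') c)
      then anchor_rev r' else rev r' ++ [c]
  end.

Definition anchor (h : list C) : list C := anchor_rev (rev h).

Definition uniform_strategy (h : list C) : C := sopt X (anchor h) h.

Lemma anchor_snoc h c : anchor (h ++ [c]) =
  if excluded_middle_informative (keeps_anchor (anchor h) h c) then anchor h else h ++ [c].
Proof. unfold anchor. rewrite rev_unit. simpl. now rewrite rev_involutive. Qed.

Lemma anchor_spec q n : exists m, m <= n /\ anchor (pre q n) = pre q m /\
  (forall k, m <= k < n -> d (pre q k) = X -> q k = sopt X (pre q m) (pre q k)) /\
  (forall o, G (pre q n) o <-> G (pre q m) o).
Proof.
  induction n as [|n [m [Hm [Ha [Hq HG]]]]].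
  - exists 0. repeat split; auto; lia.
  - rewrite pre_S, anchor_snoc, Ha.
    destruct excluded_middle_informative as [[Hmove Hkeep]|Hreset].
    + exists m. split; [lia|]. split; [reflexivity|]. split; [|exact Hkeep].
      intros k Hk Hd. destruct (Nat.eq_dec k n) as [->|]; auto. apply Hq; auto; lia.
    + exists (S n). rewrite pre_S. repeat split; auto; lia.
Qed.

Section Play.
Variables (g : list C) (q : nat -> C).
Hypothesis q_cyl : cyl g q.
Hypothesis q_consistent : consistent d X uniform_strategy (length g) q.

Lemma GX_play_step n o : length g <= n -> G (pre q (S n)) o -> G (pre q n) o.
Proof.
  intros Hn Ho. destruct (anchor_spec q n) as [m [Hm [Ha [Hq HG]]]].
  apply HG, sopt_spec. apply (gX_prefix_mono d v prec X _ q m (S n)); [lia| |apply Ho].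
  intros k Hk Hd. destruct (Nat.eq_dec k n) as [->|]; [|apply Hq; auto; lia].
  rewrite (q_consistent n Hn Hd). unfold uniform_strategy. now rewrite Ha.
Qed.

Lemma GX_play_antitone n n' o : length g <= n -> n <= n' -> G (pre q n') o -> G (pre q n) o.
Proof.
  intros Hn Hnn'. induction Hnn'; auto. intros Ho. apply IHHnn', GX_play_step; auto; lia.
Qed.

Lemma anchor_stable N : length g <= N ->
  (forall n, N <= n -> forall o, G (pre q n) o <-> G (pre q N) o) ->
  forall k, anchor (pre q (N + k)) = anchor (pre q N).
Proof.
  intros HN Hst. induction k as [|k IHk]; [now rewrite Nat.add_0_r|].
  rewrite Nat.add_succ_r, pre_S, anchor_snoc.
  destruct excluded_middle_informative as [_|Hreset]; auto. exfalso. apply Hreset. split.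
  - intros Hd. exact (q_consistent (N + k) ltac:(lia) Hd).
  - intros o. destruct (anchor_spec q (N + k)) as [m [_ [Ha [_ HG]]]].
    rewrite <- pre_S, Ha, <- HG, (Hst (S (N + k))), (Hst (N + k)) by lia. reflexivity.
Qed.

Lemma guarantee_stable :
  (exists N, length g <= N /\ forall n, N <= n -> forall o, G (pre q n) o <-> G (pre q N) o) ->
  G g (v q).
Proof.
  intros [N [HN Hst]]. destruct (anchor_spec q N) as [m [Hm [Ha [Hq HG]]]].
  assert (Hm_val : G (pre q m) (v q)).
  { apply sopt_spec, gX_consistent. exists q. rewrite pre_length.
    split; [unfold cyl; now rewrite pre_length|]. split; [|destruct swo; auto].
    intros n Hn Hd. destruct (le_lt_dec N n) as [HNn|]; [|apply Hq; auto; lia].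
    rewrite (q_consistent n ltac:(lia) Hd). unfold uniform_strategy.
    replace n with (N + (n - N)) by lia. now rewrite anchor_stable, Ha. }
  rewrite <- q_cyl. apply (GX_play_antitone _ N); auto. now apply HG.
Qed.

Lemma guarantee_unstable :
  (forall N, length g <= N -> exists n, N <= n /\ exists o, G (pre q N) o /\ ~ G (pre q n) o) ->
  G g (v q).
Proof.
  intros Hshrink. destruct swo as [_ [_ Hneg]].
  destruct (choice _ (fun n => optimal_play_value (pre q n))) as [r Hr].
  assert (Hchar : forall n o, G (pre q n) o <-> ~ R o (v (r n)))
    by (intros n o; destruct (Hr n) as [_ [H1 H2]]; exact (GX_not_below _ _ o H1 H2)).
  set (E := fun p => p = q \/ exists n, length g <= n /\ p = r n).
  assert (HE : closed_set E).
  { apply closed_with_limit. intros n _. destruct (Hr n) as [Hcyl _].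
    unfold cyl in Hcyl. now rewrite pre_length in Hcyl. }
  destruct (closed_maximum E (ex_intro _ q (or_introl eq_refl)) HE) as [o [[p [Ep <-]] Hmax]].
  assert (Hmax_r : forall n, length g <= n -> ~ R (v p) (v (r n)))
    by (intros n Hn; apply Hmax; exists (r n); split; [right; now exists n|auto]).
  destruct Ep as [->|[k [Hk ->]]].
  - rewrite <- q_cyl. apply Hchar, Hmax_r. lia.
  - exfalso. destruct (Hshrink k Hk) as [n [Hkn [o [Hok Hon]]]].
    rewrite Hchar in Hok, Hon. apply NNPP in Hon.
    exact (Hneg _ _ _ Hok (Hmax_r n ltac:(lia)) Hon).
Qed.

Lemma uniform_guarantee : G g (v q).
Proof.
  destruct (classic (exists N, length g <= N /\
     forall n, N <= n -> forall o, G (pre q n) o <-> G (pre q N) o)) as [Hst|Hnst].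
  - exact (guarantee_stable Hst).
  - apply guarantee_unstable. intros N HN. apply NNPP. intros Hno. apply Hnst.
    exists N. split; auto. intros n Hn o. split; [apply GX_play_antitone; auto|].
    intros Ho. apply NNPP. intros Ho'. apply Hno. eauto.
Qed.

End Play.
End Uniform.

Section Equilibrium.
Context {C O : Type} (d : list C -> Player) (v : (nat -> C) -> O) (prec : O -> O -> Prop).

Definition guarantees (X : Player) (s : list C -> C) : Prop :=
  forall g p, cyl g p -> consistent d X s (length g) p -> GX d v prec X g (v p).

Lemma SPE_of_guarantees (s : Player -> list C -> C) :
  (forall X, guarantees X (s X)) ->
  (forall X g x y, GX d v prec X g x -> GX d v prec (opp X) g y -> ~ precX prec X x y) ->
  SPE d v prec (fun h => s (d h) h).
Proof.
  intros Hs Hinc [g [X [t Hdev]]]. revert Hdev. apply (Hinc X g).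
  - apply Hs; [apply cyl_play|]. apply play_consistent. now intros h ->.
  - apply Hs; [apply cyl_play|]. apply play_consistent. intros h Hh.
    unfold deviate. destruct Player_eq_dec as [HX|]; [|now rewrite Hh].
    rewrite HX in Hh. destruct X; discriminate.
Qed.

End Equilibrium.

Theorem lemma22 (C O : Type) (d : list C -> Player) (v : (nat -> C) -> O)
  (prec : O -> O -> Prop) (Gamma : ((nat -> C) -> Prop) -> Prop) :
  strict_weak_order prec ->
  (forall (p : nat -> C) (phi : nat -> nat),
      (forall n, phi n < phi (S n)) ->
      (forall n, d (pre p (phi n)) = pa /\
         (forall o, GX d v prec pa (pre p (phi (S n))) o ->
                    GX d v prec pa (pre p (phi n)) o) /\
         (exists o, GX d v prec pa (pre p (phi n)) o /\
                    ~ GX d v prec pa (pre p (phi (S n))) o)) ->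
      forall n, GX d v prec pa (pre p (phi n)) (v p)) ->
  (forall gamma : list C,
      (exists s, forall o, gX d v prec pa gamma s o <-> GX d v prec pa gamma o) /\
      (exists s, forall o, gX d v prec pb gamma s o <-> GX d v prec pb gamma o)) ->
  (forall E : (nat -> C) -> Prop, (exists p, E p) -> closed_set E ->
      (exists o, (exists p, E p /\ v p = o) /\
         forall o', (exists p', E p' /\ v p' = o') -> ~ prec o o') /\
      (exists o, (exists p, E p /\ v p = o) /\
         forall o', (exists p', E p' /\ v p' = o') -> ~ prec o' o)) ->
  (forall (I : O -> Prop) (gamma : list C), extremal_interval prec I ->
      Gamma (fun p => I (v p) /\ cyl gamma p)) ->
  (forall (W : (nat -> C) -> Prop) (D : list C -> Prop), Gamma W -> determined D W) ->
  exists sigma : list C -> C, SPE d v prec sigma.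
Proof.
  intros Hswo _ Hopt Hext Hgamma Hdet.
  assert (Hinc := GX_opp_incompatible d v prec Gamma Hswo Hgamma Hdet).
  destruct (choice (fun (Xg : Player * list C) s =>
      forall o, gX d v prec (fst Xg) (snd Xg) s o <-> GX d v prec (fst Xg) (snd Xg) o))
    as [sopt Hsopt].
  { intros [[|] g]; apply Hopt. }
  assert (Hmax : forall X E, (exists p, E p) -> closed_set E ->
      exists o, (exists p, E p /\ v p = o) /\
        forall o', (exists p', E p' /\ v p' = o') -> ~ precX prec X o o')
    by (intros [|] E HE HEc; apply Hext; auto).
  set (sopt' := fun X g => sopt (X, g)).
  exists (fun h => uniform_strategy d v prec (d h) sopt' h).
  apply (SPE_of_guarantees d v prec (fun X => uniform_strategy d v prec X sopt')); auto.
  intros X g p Hcyl Hcons. apply (uniform_guarantee d v prec X sopt'); auto.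
  - now apply swo_precX.
  - intros Z g' o. apply (Hsopt (Z, g')).
  - apply Hinc.
Qed.
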